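(* For every integer $T=6k+3$ with $k\ge 1$ and every $\sigma\in\mathfrak S_3$, the vector $\sigma c$ with $c=[5k+2,\,2k+1,\,-4k-1,\,-k,\,-k,\,2k+1]$ defines a facet of $P^T$.
   Context: For an integer $T\ge 2$, let $\Omega_T$ be the set of words $w=s_1s_2\cdots s_T$ over $\{1,2,3\}$ with $s_l\neq s_{l+1}$ for $l=1,\dots,T-1$. For $w\in\Omega_T$ and an ordered pair $ij$, $i\neq j$, let $x_{ij}(w)$ be the number of indices $1\le l\le T-1$ with $s_ls_{l+1}=ij$. Vectors of $\mathbb R^6$ are indexed in the order $[x_{12},x_{13},x_{21},x_{23},x_{31},x_{32}]$. Let $a_w=[x_{12}(w),\dots,x_{32}(w)]$ and $P^T=\mathrm{conv}\{a_w:w\in\Omega_T\}$. $\mathfrak S_3$ acts on $\mathbb R^6$ by $(\sigma c)_{ij}=c_{\sigma(i)\sigma(j)}$. A vector $c$ defines a facet of $P^T$ if $c\cdot a_w\ge0$ for all $w\in\Omega_T$ and $\{x\in P^T: c\cdot x=0\}$ is a facet of $P^T$. *)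

(* Letters 1,2,3 of the paper are encoded as 0,1,2 : 'I_3. *)
From mathcomp Require Import all_boot all_order all_algebra perm.
Set Implicit Arguments. Unset Strict Implicit. Unset Printing Implicit Defensive.
Import Order.TTheory GRing.Theory Num.Theory.
Local Open Scope ring_scope.

Definition word (T : nat) := T.-tuple 'I_3.

Definition inOmega (T : nat) (w : word T) : Prop :=
  forall l : nat, (l.+1 < T)%N -> nth ord0 w l != nth ord0 w l.+1.

(* x_ij(w) = #{ 1 <= l <= T-1 : s_l s_{l+1} = ij }  (0-based here). *)
Definition xcount (T : nat) (w : word T) (i j : 'I_3) : nat :=
  \sum_(l < T.-1) ((nth ord0 w l == i) && (nth ord0 w l.+1 == j)).

(* Coordinate order [x12, x13, x21, x23, x31, x32]. *)
Definition pair_of (k : 'I_6) : 'I_3 * 'I_3 :=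
  match val k with
  | 0 => (inord 0, inord 1)
  | 1 => (inord 0, inord 2)
  | 2 => (inord 1, inord 0)
  | 3 => (inord 1, inord 2)
  | 4 => (inord 2, inord 0)
  | _ => (inord 2, inord 1)
  end.

Definition idx_of (i j : 'I_3) : 'I_6 :=
  odflt ord0 [pick k : 'I_6 | pair_of k == (i, j)].

Definition aw (R : realFieldType) (T : nat) (w : word T) : 'rV[R]_6 :=
  \row_k ((xcount w (pair_of k).1 (pair_of k).2)%:R).

Definition dotv (R : realFieldType) (c x : 'rV[R]_6) : R :=
  \sum_(k < 6) c 0 k * x 0 k.

Definition sigma_act (R : realFieldType) (s : 'S_3) (c : 'rV[R]_6) : 'rV[R]_6 :=
  \row_k c 0 (idx_of (s (pair_of k).1) (s (pair_of k).2)).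

Definition PT (R : realFieldType) (T : nat) (x : 'rV[R]_6) : Prop :=
  exists lam : word T -> R,
    (forall w, 0 <= lam w) /\ (forall w, ~ inOmega w -> lam w = 0) /\
    \sum_w lam w = 1 /\ x = \sum_w lam w *: aw R w.

Definition aff_indep (R : realFieldType) (n : nat) (p : 'I_n.+1 -> 'rV[R]_6) : bool :=
  row_free (\matrix_(i < n) (p (lift ord0 i) - p ord0)).

Definition has_affdim (R : realFieldType) (S : 'rV[R]_6 -> Prop) (d : nat) : Prop :=
  (exists p : 'I_d.+1 -> 'rV[R]_6, (forall i, S (p i)) /\ aff_indep p) /\
  (forall p : 'I_d.+2 -> 'rV[R]_6, (forall i, S (p i)) -> ~~ aff_indep p).

Definition defines_facet (R : realFieldType) (T : nat) (c : 'rV[R]_6) : Prop :=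
  (forall w : word T, inOmega w -> 0 <= dotv c (aw R w)) /\
  exists d : nat, has_affdim (@PT R T) d.+1 /\
    has_affdim (fun x => @PT R T x /\ dotv c x = 0) d.

Definition cvec (R : realFieldType) (k : nat) : 'rV[R]_6 :=
  \row_i (match val i with
          | 0 => (5 * k + 2)%:R
          | 1 => (2 * k + 1)%:R
          | 2 => - (4 * k + 1)%:R
          | 3 => - k%:R
          | 4 => - k%:R
          | _ => (2 * k + 1)%:R
          end).

From mathcomp Require Import all_boot all_order all_algebra perm.
From mathcomp Require Import ring lra zify.
Set Implicit Arguments. Unset Strict Implicit. Unset Printing Implicit Defensive.
Import Order.TTheory GRing.Theory Num.Theory.
Local Open Scope ring_scope.

(* With a = 3k + 1 and g = a * [_ = 1], the
   coefficients of c satisfy c_xy = a [x < y] - k + g y - g x, so along a word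
   c . a_w telescopes to a * (number of ascents) - k (T - 1) + g (last) - g (first).
   A stutter-free word over three letters with n transitions has at least
   (n + last - first) / 3 ascents; for T = 6k + 3 this integrality bound makes
   c . a_w >= 0.
   Every a_w has coordinate sum T - 1, so P^T has dimension at most 5 and the face
   cut out by c, which satisfies a second independent equation, at most 4.  Both
   bounds are attained by six explicit words (five of them on the face), obtained
   from words of length 9 by inserting 2k - 2 copies of the cycle 2 1 0, which
   translates all their vectors by the same amount.  The action of sigma is
   absorbed by relabelling the letters of the words, which permutes coordinates. *)

Section Transitions.
Variable T : Type.

Definition transitions (s : seq T) : seq (T * T) := zip s (behead s).

Lemma transitions_cons2 x y s :
  transitions [:: x, y & s] = (x, y) :: transitions (y :: s).
Proof. by []. Qed.

Lemma size_transitions s : size (transitions s) = (size s).-1.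
Proof. by rewrite size_zip size_behead; case: s => //= _ s; lia. Qed.

Lemma transitions_cat s1 x s2 :
  transitions (s1 ++ x :: s2) = transitions (rcons s1 x) ++ transitions (x :: s2).
Proof. by elim: s1 => [|a [|b s1] IH] //=; rewrite -IH. Qed.

Lemma transitions_cycles x y z s m :
  transitions (flatten (nseq m [:: x; y; z]) ++ x :: s) =
  flatten (nseq m [:: (x, y); (y, z); (z, x)]) ++ transitions (x :: s).
Proof. by elim: m => //= m <-; case: m. Qed.

Lemma big_transitions_nth (R : Type) (idx : R) (op : Monoid.law idx)
    (F : T -> T -> R) x0 s :
  \big[op/idx]_(l < (size s).-1) F (nth x0 s l) (nth x0 s l.+1) =
  \big[op/idx]_(e <- transitions s) F e.1 e.2.
Proof.
elim: s => [|a [|b s] IH]; rewrite ?big_ord0 ?big_nil //.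
by rewrite big_ord_recl big_cons -IH.
Qed.

Lemma sum_transitions_telescope (V : zmodType) (g : T -> V) x s :
  \sum_(e <- transitions (x :: s)) (g e.2 - g e.1) = g (last x s) - g x.
Proof.
elim: s x => [|y s IH] x; first by rewrite big_nil subrr.
by rewrite transitions_cons2 big_cons IH addrC addrA subrK.
Qed.

End Transitions.

Lemma transitions_map (T U : Type) (f : T -> U) s :
  transitions (map f s) = [seq (f e.1, f e.2) | e <- transitions s].
Proof.
elim: s => [|a s IH] //; case: s IH => [|b s] // IH.
by rewrite [map f _]/= transitions_cons2 -[f b :: _]/(map f (b :: s)) IH.
Qed.

Lemma transitions_insert_cycles (T : eqType) (x y z : T) s1 s2 m :
  perm_eq (transitions (s1 ++ flatten (nseq m [:: x; y; z]) ++ x :: s2))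
    (transitions (s1 ++ x :: s2) ++ flatten (nseq m [:: (x, y); (y, z); (z, x)])).
Proof.
set t := flatten _ ++ _.
have [s' Et] : exists s', t = x :: s' by rewrite /t; case: (m); eexists.
rewrite Et !transitions_cat -Et transitions_cycles -catA perm_cat2l.
by rewrite perm_catC.
Qed.

Definition stutter_free (T : eqType) (s : seq T) : bool :=
  all (fun e : T * T => e.1 != e.2) (transitions s).

Lemma stutter_freeP (T : eqType) (x0 : T) s :
  reflect (forall l, (l.+1 < size s)%N -> nth x0 s l != nth x0 s l.+1)
          (stutter_free s).
Proof.
apply: (iffP (all_nthP (x0, x0))); rewrite size_transitions => H l lt_l;
  have lt_l' : (l < minn (size s) (size s).-1)%N by lia.
- by have := H l; rewrite nth_zip_cond size_zip size_behead lt_l' /= nth_behead; apply; lia.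
- by rewrite /transitions nth_zip_cond size_zip size_behead lt_l' /= nth_behead H //; lia.
Qed.

Lemma stutter_free_map (T U : eqType) (f : T -> U) s :
  injective f -> stutter_free (map f s) = stutter_free s.
Proof.
move=> f_inj; rewrite /stutter_free transitions_map all_map.
by apply: eq_all => e /=; rewrite (inj_eq f_inj).
Qed.

Lemma stutter_free_insert_cycles (T : eqType) (x y z : T) s1 s2 m :
  x != y -> y != z -> z != x -> stutter_free (s1 ++ x :: s2) ->
  stutter_free (s1 ++ flatten (nseq m [:: x; y; z]) ++ x :: s2).
Proof.
move=> xy yz zx sf; rewrite /stutter_free (perm_all _ (transitions_insert_cycles _ _ _ _ _ _)).
rewrite all_cat; apply/andP; split=> //.
by elim: m => //= m ->; rewrite xy yz zx.
Qed.

Definition ascents n (s : seq 'I_n) : nat :=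
  count (fun e : 'I_n * 'I_n => (e.1 < e.2)%N) (transitions s).

Lemma ascents_lower_bound n x (s : seq 'I_n.+1) : stutter_free (x :: s) ->
  (size s + last x s <= n.+1 * ascents (x :: s) + x)%N.
Proof.
elim: s x => [|y s IH] x; first by rewrite /ascents /=; lia.
rewrite /stutter_free /ascents transitions_cons2 /= => /andP[xy /IH].
rewrite -/(ascents _).
have := ltn_ord x; have := ltn_ord y; move: xy; rewrite -val_eqE /=.
by case: ltnP => /= *; nia.
Qed.

Definition o0 : 'I_3 := @Ordinal 3 0 isT.
Definition o1 : 'I_3 := @Ordinal 3 1 isT.
Definition o2 : 'I_3 := @Ordinal 3 2 isT.

(* [pair_of] with [inord] replaced by closed ordinals, so that it computes. *)
Definition coord (k : 'I_6) : 'I_3 * 'I_3 :=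
  match val k with
  | 0 => (o0, o1) | 1 => (o0, o2) | 2 => (o1, o0)
  | 3 => (o1, o2) | 4 => (o2, o0) | _ => (o2, o1)
  end.

Lemma pair_ofE : pair_of =1 coord.
Proof.
by case=> [[|[|[|[|[|[|n]]]]]] ?]; congr pair; apply: val_inj; rewrite /= inordK.
Qed.

Lemma pair_of_neq k : (pair_of k).1 != (pair_of k).2.
Proof. by rewrite pair_ofE; case: k => [[|[|[|[|[|[|n]]]]]] ?]. Qed.

Lemma pair_of_inj : injective pair_of.
Proof.
move=> k k'; rewrite !pair_ofE => /(congr1 (fun p => (val p.1, val p.2))) E.
apply: val_inj; move: E.
by case: k => [[|[|[|[|[|[|n]]]]]] ?]; case: k' => [[|[|[|[|[|[|n']]]]]] ?].
Qed.

Lemma pair_of_surj (a b : 'I_3) : a != b -> exists k, pair_of k = (a, b).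
Proof.
case: a => [[|[|[|a]]] ?] //; case: b => [[|[|[|b]]] ?] // _;
  [exists (@Ordinal 6 0 isT) | exists (@Ordinal 6 1 isT) | exists (@Ordinal 6 2 isT)
  | exists (@Ordinal 6 3 isT) | exists (@Ordinal 6 4 isT) | exists (@Ordinal 6 5 isT)];
  by rewrite pair_ofE; congr pair; apply: val_inj.
Qed.

Lemma pair_of_idx (a b : 'I_3) : a != b -> pair_of (idx_of a b) = (a, b).
Proof.
move=> ab; rewrite /idx_of; case: pickP => [k /eqP //|none].
by have [k Hk] := pair_of_surj ab; have := none k; rewrite Hk eqxx.
Qed.

Lemma idx_of_pair k : idx_of (pair_of k).1 (pair_of k).2 = k.
Proof. by apply: pair_of_inj; rewrite pair_of_idx ?pair_of_neq // -surjective_pairing. Qed.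

Lemma inOmegaP T (w : word T) : reflect (inOmega w) (stutter_free w).
Proof. by have := stutter_freeP ord0 w; rewrite size_tuple. Qed.

Section PairVectors.
Variable R : realFieldType.

Definition pair_row (f : 'I_3 -> 'I_3 -> R) : 'rV[R]_6 :=
  \row_k f (pair_of k).1 (pair_of k).2.

Definition trans_vec (s : seq 'I_3) : 'rV[R]_6 :=
  \row_k (count_mem (pair_of k) (transitions s))%:R.

Lemma aw_trans_vec T (w : word T) : aw R w = trans_vec w.
Proof.
apply/rowP => k; rewrite !mxE /xcount.
have -> : T.-1 = (size w).-1 by rewrite size_tuple.
rewrite (big_transitions_nth (idx := 0%N) addn (fun a b => ((a == _) && (b == _) : nat))).
rewrite -sum1_count; congr _%:R; rewrite [RHS]big_mkcond; apply: eq_bigr => -[a b] _.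
case: (pair_of k) => i j /=.
by case: ((a, b) =P (i, j)) => [[-> ->]|]; [rewrite !eqxx | do 2!case: eqP => // ->].
Qed.

Lemma trans_vec_insert_cycles (x y z : 'I_3) s1 s2 m :
  trans_vec (s1 ++ flatten (nseq m [:: x; y; z]) ++ x :: s2) =
  trans_vec (s1 ++ x :: s2) + m%:R *: trans_vec [:: x; y; z; x].
Proof.
apply/rowP => k; rewrite !mxE.
have /seq.permP -> := transitions_insert_cycles x y z s1 s2 m.
by rewrite count_cat count_flatten map_nseq sumn_nseq natrD natrM mulrC.
Qed.

Lemma dotvE (c x : 'rV[R]_6) : dotv c x = (x *m c^T) 0 0.
Proof. by rewrite !mxE; apply: eq_bigr => j _; rewrite mxE mulrC. Qed.

Lemma dotvDr (c x y : 'rV[R]_6) : dotv c (x + y) = dotv c x + dotv c y.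
Proof. by rewrite !dotvE mulmxDl mxE. Qed.

Lemma dotvZr (c x : 'rV[R]_6) a : dotv c (a *: x) = a * dotv c x.
Proof. by rewrite !dotvE -scalemxAl mxE. Qed.

Lemma dotv_sumr (I : finType) (c : 'rV[R]_6) (lam : I -> R) (x : I -> 'rV[R]_6) :
  dotv c (\sum_i lam i *: x i) = \sum_i lam i * dotv c (x i).
Proof.
rewrite dotvE mulmx_suml summxE; apply: eq_bigr => i _.
by rewrite -dotvZr dotvE.
Qed.

Lemma dotv_pair_row f s : stutter_free s ->
  dotv (pair_row f) (trans_vec s) = \sum_(e <- transitions s) f e.1 e.2.
Proof.
move=> /allP sf; rewrite /dotv.
under eq_bigr => k _ do rewrite !mxE -sum1_count natr_sum mulr_sumr big_mkcond.
rewrite exchange_big /=; apply: eq_big_seq => e /sf /= e12.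
rewrite (bigD1 (idx_of e.1 e.2)) //= pair_of_idx // -surjective_pairing eqxx mulr1.
rewrite big1 ?addr0 // => k kn; case: eqP => // E.
by move: kn; rewrite E idx_of_pair eqxx.
Qed.

Lemma sigma_act_pair_row (p : 'S_3) f :
  sigma_act p (pair_row f) = pair_row (fun a b => f (p a) (p b)).
Proof. by apply/rowP => k; rewrite !mxE pair_of_idx // (inj_eq perm_inj) pair_of_neq. Qed.

Lemma const_mx1_pair_row : const_mx 1 = pair_row (fun _ _ => 1).
Proof. by apply/rowP => k; rewrite !mxE. Qed.

End PairVectors.

Definition relabel_fun (p : 'S_3) (k : 'I_6) : 'I_6 :=
  idx_of (p (pair_of k).1) (p (pair_of k).2).

Lemma pair_of_relabel p k :
  pair_of (relabel_fun p k) = (p (pair_of k).1, p (pair_of k).2).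
Proof. by rewrite pair_of_idx // (inj_eq perm_inj) pair_of_neq. Qed.

Lemma relabel_fun_inj p : injective (relabel_fun p).
Proof.
move=> k k' /(congr1 pair_of); rewrite !pair_of_relabel => -[/perm_inj E1 /perm_inj E2].
by apply: pair_of_inj; rewrite [pair_of k]surjective_pairing E1 E2 -surjective_pairing.
Qed.

Definition relabel (p : 'S_3) : 'S_6 := perm (@relabel_fun_inj p).

Lemma trans_vec_map (R : realFieldType) (p : 'S_3) s :
  trans_vec R (map p s) = col_perm (relabel p^-1) (trans_vec R s).
Proof.
apply/rowP => k; rewrite !mxE permE pair_of_relabel transitions_map count_map.
congr _%:R; apply: eq_count => -[a b] /=.
by rewrite [pair_of k]surjective_pairing !xpair_eqE /= !(canF_eq (permK p)).
Qed.

Section Cost.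
Variable R : realFieldType.

Definition cost (k : nat) (a b : 'I_3) : R :=
  match val a, val b with
  | 0, 1 => (5 * k + 2)%:R | 0, 2 => (2 * k + 1)%:R | 1, 0 => - (4 * k + 1)%:R
  | 1, 2 => - k%:R | 2, 0 => - k%:R | 2, 1 => (2 * k + 1)%:R | _, _ => 0
  end.

Lemma cvec_pair_row k : cvec R k = pair_row (cost k).
Proof. by apply/rowP => j; rewrite !mxE pair_ofE; case: j => [[|[|[|[|[|[|j]]]]]] ?]. Qed.

Lemma cost_decomposition k (a b : 'I_3) : a != b ->
  cost k a b = ((3 * k + 1) * (a < b)%N)%:R - k%:R
               + (((3 * k + 1) * (b == o1))%:R - ((3 * k + 1) * (a == o1))%:R).
Proof.
case: a => [[|[|[|a]]] ?] //; case: b => [[|[|[|b]]] ?] // _;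
  rewrite /cost /= ?natrD ?natrM; ring.
Qed.

Lemma cost_sum_ge0 k s : stutter_free s -> size s = (6 * k + 3)%N ->
  0 <= \sum_(e <- transitions s) cost k e.1 e.2.
Proof.
case: s => [|x s] sf size_s; first by rewrite addn3 in size_s.
have {}size_s : size s = (6 * k + 2)%N by move: size_s => /=; lia.
pose g (a : 'I_3) : R := ((3 * k + 1) * (a == o1))%:R.
rewrite (eq_big_seq (fun e : 'I_3 * 'I_3 =>
    ((3 * k + 1) * (e.1 < e.2)%N)%:R - k%:R + (g e.2 - g e.1))); last first.
  by move=> e /(allP sf) /cost_decomposition ->.
rewrite big_split sum_transitions_telescope sumrB /= -natr_sum -big_distrr /=.
rewrite big_const_seq iter_addr_0 count_predT size_transitions /= size_s.
have -> : \sum_(e <- transitions (x :: s)) ((e.1 < e.2)%N : nat) = ascents (x :: s).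
  by rewrite /ascents -sum1_count [RHS]big_mkcond; apply: eq_bigr => e _; case: ltnP.
have := ascents_lower_bound sf; rewrite size_s.
have := ltn_ord x; have := ltn_ord (last x s); rewrite /g -!val_eqE /=.
set a := ascents _; set l := last x s => l3 x3 bound.
have a_ge : (2 * k + (x == 1 :> nat) <= a)%N by case: eqP => /= [x1|x1]; lia.
have : (k * (6 * k + 2) + (3 * k + 1) * (x == 1 :> nat)
        <= (3 * k + 1) * a + (3 * k + 1) * (l == 1 :> nat))%N.
  by have := leq_mul (leqnn (3 * k + 1)) a_ge; nia.
by rewrite -(ler_nat R) !natrD -[k%:R *+ _]mulr_natr -natrM; lra.
Qed.

Lemma sigma_cvec_valid k (p : 'S_3) (w : word (6 * k + 3)) :
  inOmega w -> 0 <= dotv (sigma_act p (cvec R k)) (aw R w).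
Proof.
move=> /inOmegaP sf.
rewrite cvec_pair_row sigma_act_pair_row aw_trans_vec dotv_pair_row //.
rewrite -(big_map (fun e => (p e.1, p e.2)) xpredT (fun e => cost k e.1 e.2)).
rewrite -transitions_map; apply: cost_sum_ge0; last by rewrite size_map size_tuple.
by rewrite stutter_free_map //; apply: perm_inj.
Qed.

Lemma sigma_cvec_nonconstant k (p : 'S_3) :
  sigma_act p (cvec R k) 0 (idx_of (p^-1%g o0) (p^-1%g o1)) !=
  sigma_act p (cvec R k) 0 (idx_of (p^-1%g o1) (p^-1%g o0)).
Proof.
rewrite cvec_pair_row sigma_act_pair_row !mxE !pair_of_idx ?(inj_eq perm_inj) //= !permKV.
have := ler0n R (5 * k + 2); have := ler0n R (4 * k + 1).
by rewrite /cost /= => *; apply/eqP; lra.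
Qed.

End Cost.

Section AffineDimension.
Variable R : realFieldType.

Lemma aff_indep_col_perm_translate n (p q : 'I_n.+1 -> 'rV[R]_6) (r : 'S_6) v :
  (forall i, q i = col_perm r (p i + v)) -> aff_indep q = aff_indep p.
Proof.
move=> qE; rewrite /aff_indep.
have -> : \matrix_(i < n) (q (lift ord0 i) - q ord0)
          = col_perm r (\matrix_(i < n) (p (lift ord0 i) - p ord0)).
  by apply/matrixP => i j; rewrite !mxE !qE !mxE; ring.
by rewrite col_permE /row_free mxrankMfree // row_free_unit unitmx_perm.
Qed.

Lemma aff_indep_size n r (p : 'I_n.+1 -> 'rV[R]_6) (B : 'M[R]_(r, 6)) e :
  row_free B -> (forall i, p i *m B^T = e) -> aff_indep p -> (n + r <= 6)%N.
Proof.
move=> freeB pB freeD.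
have : \matrix_(i < n) (p (lift ord0 i) - p ord0) *m B^T = 0.
  by apply/row_matrixP => i; rewrite row_mul rowK mulmxBl !pB subrr row0.
move/(congr1 mxrank); rewrite mxrank0 => /eqP; rewrite -leqn0 => rank0.
have := leq_trans (mxrank_mul_min _ _) rank0.
by move: freeD freeB; rewrite /aff_indep /row_free mxrank_tr => /eqP -> /eqP ->; lia.
Qed.

Lemma mul_tr_dotv (c x : 'rV[R]_6) : x *m c^T = (dotv c x)%:M.
Proof. by rewrite [LHS]mx11_scalar dotvE. Qed.

Lemma row_free_const_col_mx (c : 'rV[R]_6) j1 j2 :
  c 0 j1 != c 0 j2 -> row_free (col_mx (const_mx 1 : 'rV[R]_6) c).
Proof.
move=> c12; apply/inj_row_free => v.
rewrite -[v]hsubmxK mul_row_col => /rowP E.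
have Ej j : lsubmx v 0 0 + rsubmx v 0 0 * c 0 j = 0.
  by have := E j; rewrite !mxE !big_ord1 !mxE mulr1.
have b0 : rsubmx v 0 0 = 0.
  have : rsubmx v 0 0 * (c 0 j1 - c 0 j2) = 0.
    by rewrite mulrBr; have := Ej j1; have := Ej j2; lra.
  by move/eqP; rewrite mulf_eq0 subr_eq0 (negbTE c12) orbF => /eqP.
have a0 : lsubmx v 0 0 = 0 by have := Ej j1; rewrite b0 mul0r addr0.
by rewrite [lsubmx v]mx11_scalar [rsubmx v]mx11_scalar a0 b0 raddf0 row_mx0.
Qed.

End AffineDimension.

Section PolytopeConstraints.
Variables (R : realFieldType) (T : nat).

Lemma PT_trans_vec s : stutter_free s -> size s = T -> PT T (trans_vec R s).
Proof.
move=> sf size_s; pose w : word T := tcast size_s (in_tuple s).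
have ws : val w = s by apply: val_tcast.
exists (fun v => (v == w)%:R); split; first by move=> v; rewrite ler0n.
split; first by move=> v; case: eqP => // -> []; apply/inOmegaP; rewrite ws.
split; first by rewrite (bigD1 w) //= eqxx big1 ?addr0 // => v /negbTE ->.
rewrite (bigD1 w) //= eqxx scale1r big1 ?addr0 ?aw_trans_vec ?ws // => v /negbTE ->.
by rewrite scale0r.
Qed.

Lemma PT_dotv_const c e (x : 'rV[R]_6) :
  (forall w : word T, inOmega w -> dotv c (aw R w) = e) -> PT T x -> dotv c x = e.
Proof.
move=> ce [lam [lam_ge0 [lam_out [lam_sum ->]]]].
rewrite dotv_sumr -[RHS]mul1r -lam_sum mulr_suml; apply: eq_bigr => w _.
by case: (inOmegaP w) => [/ce ->|/lam_out ->]; rewrite ?mul0r.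
Qed.

Lemma PT_sum_coords (x : 'rV[R]_6) : PT T x -> dotv (const_mx 1) x = T.-1%:R.
Proof.
apply: PT_dotv_const => w /inOmegaP sf.
rewrite aw_trans_vec const_mx1_pair_row dotv_pair_row //.
by rewrite big_const_seq iter_addr_0 count_predT size_transitions size_tuple.
Qed.

Lemma PT_not_aff_indep (p : 'I_7 -> 'rV[R]_6) :
  (forall i, PT T (p i)) -> ~~ aff_indep p.
Proof.
move=> Pp; apply/negP => indep; suff : (6 + 1 <= 6)%N by [].
apply: (aff_indep_size (B := const_mx 1) (e := (T.-1%:R)%:M) _ _ indep) => [|i].
  have nz : (const_mx 1 : 'rV[R]_6) != 0.
    apply/eqP => /(congr1 (fun M : 'rV[R]_6 => M 0 ord0)); rewrite !mxE.
    by apply/eqP; apply: oner_neq0.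
  by rewrite /row_free rank_rV nz.
by rewrite mul_tr_dotv PT_sum_coords.
Qed.

Lemma face_not_aff_indep (c : 'rV[R]_6) j1 j2 (p : 'I_6 -> 'rV[R]_6) :
  c 0 j1 != c 0 j2 -> (forall i, PT T (p i) /\ dotv c (p i) = 0) -> ~~ aff_indep p.
Proof.
move=> c12 Pp; apply/negP => indep; suff : (5 + 2 <= 6)%N by [].
apply: (aff_indep_size (B := col_mx (const_mx 1) c) (e := row_mx (T.-1%:R)%:M 0%:M)
  _ _ indep) => [|i]; first exact: row_free_const_col_mx c12.
have [/PT_sum_coords sum_pi c_pi] := Pp i.
by rewrite tr_col_mx mul_mx_row !mul_tr_dotv sum_pi c_pi.
Qed.

End PolytopeConstraints.

(* Words 0-4 lie on the facet for k = n + 1 once 2n copies of 2 1 0 are inserted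
   before their distinguished letter 2; word 5 does not. *)
Definition base_split (i : nat) : seq 'I_3 * seq 'I_3 :=
  match i with
  | 0 => ([:: o2; o1; o0; o2; o1; o0], [:: o1; o0])
  | 1 => ([:: o1; o0; o1; o0; o1; o0], [:: o1; o0])
  | 2 => ([:: o1; o0; o2; o0; o2; o0], [:: o1; o0])
  | 3 => ([:: o1; o0; o2; o1; o2; o1], [:: o1; o0])
  | 4 => ([:: o1; o0; o2; o1; o0], [:: o1; o0; o2])
  | _ => ([:: o0; o1; o0; o1; o0; o1], [:: o1; o0])
  end.

Definition base_word i := (base_split i).1 ++ o2 :: (base_split i).2.

Definition pumped_word m i :=
  (base_split i).1 ++ flatten (nseq m [:: o2; o1; o0]) ++ o2 :: (base_split i).2.

Lemma size_pumped_word m i : size (pumped_word m i) = (3 * m + 9)%N.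
Proof.
rewrite !size_cat size_flatten /shape map_nseq sumn_nseq /=.
by case: i => [|[|[|[|[|i]]]]] /=; lia.
Qed.

Lemma stutter_free_pumped_word m i : stutter_free (pumped_word m i).
Proof. by apply: stutter_free_insert_cycles => //; case: i => [|[|[|[|[|i]]]]]. Qed.

Lemma base_words_aff_indep (R : realFieldType) n : (n <= 4)%N ->
  aff_indep (fun i : 'I_n.+2 => trans_vec R (base_word i)).
Proof.
case: n => [|[|[|[|[|n]]]]] // _; apply/inj_row_free => v /rowP col;
  have := col (@Ordinal 6 0 isT); have := col (@Ordinal 6 1 isT);
  have := col (@Ordinal 6 2 isT); have := col (@Ordinal 6 3 isT);
  have := col (@Ordinal 6 4 isT); have := col (@Ordinal 6 5 isT);
  rewrite !mxE !big_ord_recl !big_ord0 !mxE !pair_ofE /= => *;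
  apply/rowP => i; rewrite mxE; do ?[case: (unliftP ord0 i) => [{}i ->|->]];
  first [by case: i | lra].
Qed.

Section FacetPoints.
Variables (R : realFieldType) (n : nat) (p : 'S_3).

Definition facet_point (i : nat) : 'rV[R]_6 :=
  trans_vec R (map p^-1%g (pumped_word (2 * n) i)).

Lemma stutter_free_facet_word i : stutter_free (map p^-1%g (pumped_word (2 * n) i)).
Proof. by rewrite stutter_free_map ?stutter_free_pumped_word //; apply: perm_inj. Qed.

Lemma facet_point_PT i : PT (6 * n.+1 + 3) (facet_point i).
Proof.
apply: PT_trans_vec; first exact: stutter_free_facet_word.
by rewrite size_map size_pumped_word; lia.
Qed.

Lemma facet_pointE i : facet_point i =
  col_perm (relabel p)
    (trans_vec R (base_word i) + (2 * n)%:R *: trans_vec R [:: o2; o1; o0; o2]).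
Proof. by rewrite /facet_point trans_vec_map invgK trans_vec_insert_cycles. Qed.

Lemma facet_point_face i :
  (i < 5)%N -> dotv (sigma_act p (cvec R n.+1)) (facet_point i) = 0.
Proof.
move=> lt_i5; rewrite cvec_pair_row sigma_act_pair_row /facet_point.
rewrite dotv_pair_row ?stutter_free_facet_word // transitions_map big_map.
under eq_bigr => e _ do rewrite /= !permKV.
rewrite -dotv_pair_row ?stutter_free_pumped_word // trans_vec_insert_cycles.
rewrite dotvDr dotvZr; case: i lt_i5 => [|[|[|[|[|i]]]]] // _.
all: by rewrite !dotv_pair_row //= !big_cons big_nil /cost /=; ring.
Qed.

End FacetPoints.

Theorem proposition11 (R : realFieldType) (k : nat) (hk : (1 <= k)%N) (s : 'S_3) :
  defines_facet (6 * k + 3) (sigma_act s (cvec R k)).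
Proof.
split=> [w|]; first exact: sigma_cvec_valid.
exists 4%N; case: k hk => // n _.
have indep m : (m <= 4)%N -> aff_indep (fun i : 'I_m.+2 => facet_point R n s i).
  move=> le_m4; rewrite (aff_indep_col_perm_translate (fun i => facet_pointE R n s i)).
  exact: base_words_aff_indep.
split; split.
- exists (fun i : 'I_6 => facet_point R n s i).
  by split=> [i|]; [apply: facet_point_PT | apply: indep].
- exact: PT_not_aff_indep.
- exists (fun i : 'I_5 => facet_point R n s i).
  by split=> [i|]; [split; [apply: facet_point_PT | apply: facet_point_face] | apply: indep].
- by move=> q; apply: face_not_aff_indep (sigma_cvec_nonconstant R n.+1 s).
Qed.
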